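(* Let $\mathsf C=(C_1,\dots,C_n)$ be an $n$-outcome observable on a Hilbert space $\mathcal H_d$ of finite dimension $d$. Then $$\sup_{\mathsf A}\|\mathsf C-\mathsf A\|=2\big(1-b(\mathsf C)\big),$$ where the supremum is over all $n$-outcome observables $\mathsf A=(A_1,\dots,A_n)$ on $\mathcal H_d$ and $\|\mathsf C-\mathsf A\|=\sup_{\varrho}\sum_{j=1}^n|\operatorname{tr}(\varrho(C_j-A_j))|$, the supremum being over density operators $\varrho$ on $\mathcal H_d$.
   Context: An $n$-outcome observable on $\mathcal H_d$ is an $n$-tuple of positive operators summing to $I$; these form a convex set $Z$ under componentwise convex combination. The norm $\|\cdot\|$ above is the base norm (equivalently completely bounded norm) for observables. For $x,y\in Z$, the weight function is $t_y(x)=\sup\{0\leq t<1 : \frac{y-tx}{1-t}\in Z\}$, and the boundariness of $y$ is $b(y)=\inf_{x\in Z}t_y(x)$. (Here $b(\mathsf C)$ equals the smallest eigenvalue among all $C_j$.) *)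

From HB Require Import structures.
From mathcomp Require Import all_boot all_order all_algebra.
From mathcomp Require Import complex.
From mathcomp Require Import boolp classical_sets reals.
Set Implicit Arguments. Unset Strict Implicit. Unset Printing Implicit Defensive.
Import Order.TTheory GRing.Theory Num.Theory.
Local Open Scope ring_scope.
Local Open Scope complex_scope.
Local Open Scope ring_scope.

Section QDefs.
Variables (R : realType) (d n : nat).
Local Notation C := R[i].

Definition adjmx m p (A : 'M[C]_(m, p)) : 'M[C]_(p, m) := (map_mx (@conjc R) A)^T.

Definition psd (A : 'M[C]_d) : Prop :=
  forall v : 'cV[C]_d, 0 <= (adjmx v *m A *m v) 0 0.

Definition observable (A : 'I_n -> 'M[C]_d) : Prop :=
  (forall j, psd (A j)) /\ \sum_(j < n) A j = 1%:M.

Definition density (rho : 'M[C]_d) : Prop := psd rho /\ \tr rho = 1.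

Definition obs_dist (Cobs A : 'I_n -> 'M[C]_d) : R :=
  sup [set (\sum_(j < n) @complex.Re R `|\tr (rho *m (Cobs j - A j))|) | rho in density].

Definition wcomb (y x : 'I_n -> 'M[C]_d) (t : R) : 'I_n -> 'M[C]_d :=
  fun j => ((1 - t)^-1)%:C *: (y j - t%:C *: x j).

Definition weight (y x : 'I_n -> 'M[C]_d) : R :=
  sup [set t : R | 0 <= t < 1 /\ observable (wcomb y x t)].

Definition boundariness (y : 'I_n -> 'M[C]_d) : R :=
  inf [set weight y x | x in observable].

End QDefs.

From HB Require Import structures.
From mathcomp Require Import all_boot all_order all_algebra.
From mathcomp Require Import complex.
From mathcomp Require Import boolp classical_sets reals.
From mathcomp Require Import sesquilinear spectral lra.
Set Implicit Arguments. Unset Strict Implicit. Unset Printing Implicit Defensive.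
Import Order.TTheory GRing.Theory Num.Theory.
Local Open Scope classical_set_scope.
Local Open Scope complex_scope.
Local Open Scope ring_scope.

(* Let mu be the least outcome probability tr(rho C_j) over all states rho and
   outcomes j, i.e. the least eigenvalue of the effects C_j.  Since C_j >= mu I
   and A_j <= I for any observable A, (C - t A)/(1 - t) is an observable for
   every t <= mu, so b(C) >= mu.  Conversely, for the sharp observable A with
   A_j = I, positivity of (C_j - t I)/(1 - t) in a state rho forces
   t <= tr(rho C_j), so b(C) <= mu.  For the distance, two probability vectors
   a, b with all a_j >= mu satisfy sum_j |a_j - b_j| <= 2(1 - mu), and the
   sharp observable at j reaches 2(1 - tr(rho C_j)).  In dimension 0 there is
   no state: every distance is 0 and every weight is 1. *)

Section real_lemmas.
Variable R : realType.

Lemma ler_term_sum n (F : 'I_n -> R) j : (forall k, 0 <= F k) -> F j <= \sum_k F k.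
Proof. by move=> F0; rewrite (bigD1 j) //= lerDl sumr_ge0. Qed.

Lemma le_sup_of_interval (W : set R) m b :
  W 0 -> ubound W b -> (forall t, 0 <= t < m -> W t) -> m <= sup W.
Proof.
move=> W0 Wb Wm; have Wsup := sup_upper_bound (conj (ex_intro _ 0 W0) (ex_intro _ b Wb)).
have sup_ge0 := Wsup 0 W0.
rewrite leNgt; apply/negP => lt_sup_m.
have /Wsup : W ((sup W + m) / 2) by apply: Wm; apply/andP; split; lra.
lra.
Qed.

(* From [|a - b| <= a + b - 2 m b]: for [b <= a] this is [m <= 1],
   otherwise [m b <= m <= a]. *)
Lemma sum_abs_sub_le n (a b : 'I_n -> R) m : 0 <= m ->
  (forall j, m <= a j) -> (forall j, 0 <= b j) ->
  \sum_j a j = 1 -> \sum_j b j = 1 -> \sum_j `|a j - b j| <= 2 * (1 - m).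
Proof.
move=> m0 ma b0 sa sb.
have a_le1 j : a j <= 1 by rewrite -sa ler_term_sum // => k; apply: le_trans (ma k).
have b_le1 j : b j <= 1 by rewrite -sb ler_term_sum.
apply: (@le_trans _ _ (\sum_j (a j + b j - 2 * m * b j))).
  apply: ler_sum => j _; have := ma j; have := b0 j; have := a_le1 j; have := b_le1 j.
  have : m * b j <= m by rewrite ler_piMr.
  by case: (lerP (b j) (a j)); nra.
by rewrite sumrB big_split /= sa sb -mulr_sumr sb; lra.
Qed.

Lemma sum_abs_sub_delta n (a : 'I_n -> R) j : (forall k, 0 <= a k) ->
  \sum_k a k = 1 -> \sum_k `|a k - (k == j)%:R| = 2 * (1 - a j).
Proof.
move=> a0 sa; rewrite (bigD1 j) //= eqxx ler0_norm; last by rewrite subr_le0 -sa ler_term_sum.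
rewrite (eq_bigr a) => [|k /negbTE ->]; last by rewrite subr0 ger0_norm.
by move: sa; rewrite (bigD1 j) //=; lra.
Qed.

End real_lemmas.

Section adjoint.
Variable R : realType.
Local Notation C := R[i].

Lemma adjmxD m p (A B : 'M[C]_(m, p)) : adjmx (A + B) = adjmx A + adjmx B.
Proof. by rewrite /adjmx map_mxD linearD. Qed.

Lemma adjmxZ m p c (A : 'M[C]_(m, p)) : adjmx (c *: A) = c^* *: adjmx A.
Proof. by rewrite /adjmx map_mxZ linearZ. Qed.

Lemma adjmxM m p q (A : 'M[C]_(m, p)) (B : 'M[C]_(p, q)) :
  adjmx (A *m B) = adjmx B *m adjmx A.
Proof. by rewrite /adjmx map_mxM trmx_mul. Qed.

Lemma adjmxE m p (A : 'M[C]_(m, p)) i j : adjmx A i j = (A j i)^*.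
Proof. by rewrite !mxE. Qed.

Lemma adjmxK m p (A : 'M[C]_(m, p)) : adjmx (adjmx A) = A.
Proof. by apply/matrixP => i j; rewrite !mxE conjcK. Qed.

Lemma adjmx_delta m p (i : 'I_m) (j : 'I_p) :
  adjmx (delta_mx i j : 'M[C]_(m, p)) = delta_mx j i.
Proof. by apply/matrixP => a b; rewrite !mxE andbC conjc_nat. Qed.

Lemma adjmx_trmxC m p (A : 'M[C]_(m, p)) : adjmx A = (A ^t*)%sesqui.
Proof. by rewrite /adjmx map_trmx. Qed.

Lemma ger0_conjc (z : C) : 0 <= z -> z^* = z.
Proof. by move/ger0_real/CrealP. Qed.

Lemma conjc_offdiag (a b x y : C) : a^* = a -> b^* = b ->
  (forall c, (a + c * x + c^* * y + c^* * c * b)^* = a + c * x + c^* * y + c^* * c * b) ->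
  y^* = x.
Proof.
move=> real_a real_b real_c; move: real_a real_b (real_c 1) (real_c 'i) => {real_c}.
case: a b x y => [a1 a2] [b1 b2] [x1 x2] [y1 y2].
do 4![move=> /eqP; rewrite eq_complex /= => /andP[_ /eqP ?]].
apply/eqP; rewrite eq_complex /=; apply/andP; split; apply/eqP; lra.
Qed.

End adjoint.

Section positive_operators.
Variables (R : realType) (d : nat).
Local Notation C := R[i].
Implicit Types (A M rho : 'M[C]_d) (u v w : 'cV[C]_d).

Definition form A u w : C := (adjmx u *m A *m w) 0 0.

Lemma formDl A u v w : form A (u + v) w = form A u w + form A v w.
Proof. by rewrite /form adjmxD !mulmxDl mxE. Qed.

Lemma formDr A u v w : form A u (v + w) = form A u v + form A u w.
Proof. by rewrite /form !mulmxDr mxE. Qed.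

Lemma formZl A c u w : form A (c *: u) w = c^* * form A u w.
Proof. by rewrite /form adjmxZ -!scalemxAl mxE. Qed.

Lemma formZr A c u w : form A u (c *: w) = c * form A u w.
Proof. by rewrite /form -scalemxAr mxE. Qed.

Lemma form_delta A i j : form A (delta_mx i 0) (delta_mx j 0) = A i j.
Proof. by rewrite /form adjmx_delta -rowE -colE !mxE. Qed.

Lemma psd1 : psd (1%:M : 'M[C]_d).
Proof.
move=> v; rewrite mulmx1 mxE; apply: sumr_ge0 => k _.
by rewrite !mxE mulrC mulcJ_ge0.
Qed.

Lemma psd0 : psd (0 : 'M[C]_d).
Proof. by move=> v; rewrite mulmx0 mul0mx mxE. Qed.

Lemma psdD A M : psd A -> psd M -> psd (A + M).
Proof. by move=> pA pM v; rewrite mulmxDr mulmxDl mxE addr_ge0. Qed.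

Lemma psdZ (c : R) A : 0 <= c -> psd A -> psd (c%:C *: A).
Proof.
by move=> c0 pA v; rewrite -scalemxAr -scalemxAl mxE mulr_ge0 ?ler0c.
Qed.

Lemma psd_sum (I : finType) (P : pred I) (F : I -> 'M[C]_d) :
  (forall i, P i -> psd (F i)) -> psd (\sum_(i | P i) F i).
Proof.
move=> pF v; rewrite mulmx_sumr mulmx_suml summxE.
by apply: sumr_ge0 => i /pF; apply.
Qed.

(* Positivity of the form at [e_i + e_j] and [e_i + 'i e_j] makes [A_ij + A_ji]
   and ['i (A_ij - A_ji)] real. *)
Lemma psd_adjmx A : psd A -> adjmx A = A.
Proof.
move=> pA; apply/matrixP => i j; rewrite adjmxE.
set e := fun k => delta_mx k 0 : 'cV[C]_d.
have formE c : form A (e i + c *: e j) (e i + c *: e j) =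
    A i i + c * A i j + c^* * A j i + c^* * c * A j j.
  by rewrite formDl !formDr !formZl !formZr !form_delta mulrA addrA.
have real_diag k : (A k k)^* = A k k by rewrite -form_delta; apply/ger0_conjc/pA.
apply: conjc_offdiag (real_diag i) (real_diag j) _ => c.
by rewrite -formE; apply/ger0_conjc/pA.
Qed.

Lemma psd_conj_diag_ge0 (P : 'M[C]_d) A i : psd A -> 0 <= (P *m A *m adjmx P) i i.
Proof.
move=> pA; have := pA (adjmx (row i P)); rewrite adjmxK.
suff -> : (P *m A *m adjmx P) i i = (row i P *m A *m adjmx (row i P)) 0 0 by [].
rewrite !mxE; apply: eq_bigr => k _; rewrite !mxE; congr (_ * _).
by apply: eq_bigr => l _; rewrite !mxE.
Qed.

(* Diagonalize [rho = P^* D P] with [P] unitary; then [tr (rho M)] is the sum of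
   the products of the diagonal entries of [P rho P^*] and [P M P^*]. *)
Lemma tr_mul_psd_ge0 rho M : psd rho -> psd M -> 0 <= \tr (rho *m M).
Proof.
move=> prho pM.
have normal_rho : rho \is normalmx.
  by apply/normalmxP; rewrite -adjmx_trmxC psd_adjmx.
have P_unitary := spectral_unitarymx rho.
have rhoE := orthomx_spectralP normal_rho.
set P := spectralmx rho in rhoE P_unitary *; set D := spectral_diag rho in rhoE *.
rewrite (invmx_unitary P_unitary) in rhoE.
have diagE : P *m rho *m adjmx P = diag_mx D.
  by rewrite rhoE adjmx_trmxC !mulmxA (unitarymxP P_unitary) mul1mx mulmxtVK.
rewrite rhoE -!mulmxA mxtrace_mulC -!mulmxA mxtrace_mulC !mulmxA -adjmx_trmxC.
rewrite /mxtrace; apply: sumr_ge0 => i _.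
rewrite mul_mx_diag mxE mulr_ge0 ?psd_conj_diag_ge0 //.
by have := psd_conj_diag_ge0 P i prho; rewrite diagE mxE eqxx mulr1n.
Qed.

Definition pure_state v : 'M[C]_d := (form 1%:M v v)^-1 *: (v *m adjmx v).

Lemma tr_pure_state v M : form 1%:M v v != 0 ->
  \tr (pure_state v *m M) = (form 1%:M v v)^-1 * form M v v.
Proof.
move=> v_neq0; rewrite /pure_state -scalemxAl mxtraceZ -mulmxA mxtrace_mulC.
by rewrite /mxtrace big_ord1.
Qed.

Lemma pure_state_density v : form 1%:M v v != 0 -> density (pure_state v).
Proof.
move=> v_neq0; split; last by rewrite -[pure_state v]mulmx1 tr_pure_state // mulVf.
move=> u; rewrite /pure_state -scalemxAr -scalemxAl mxE mulr_ge0 ?invr_ge0 ?psd1 //.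
rewrite !mulmxA -[_ *m v *m _ *m u]mulmxA mxE big_ord1.
have -> : adjmx v *m u = adjmx (adjmx u *m v) by rewrite adjmxM adjmxK.
by rewrite adjmxE mulcJ_ge0.
Qed.

Lemma density_exists : (0 < d)%N -> exists rho, density rho.
Proof.
move=> d_gt0; pose e : 'cV[C]_d := delta_mx (Ordinal d_gt0) 0.
by exists (pure_state e); apply: pure_state_density; rewrite form_delta mxE eqxx oner_eq0.
Qed.

End positive_operators.

Section probabilities.
Variables (R : realType) (d n : nat).
Local Notation C := R[i].
Implicit Types (M rho : 'M[C]_d) (A : 'I_n -> 'M[C]_d).

Definition prob rho M : R := complex.Re (\tr (rho *m M)).

Lemma tr_mul_psdE rho M : psd rho -> psd M -> \tr (rho *m M) = (prob rho M)%:C.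
Proof. by move=> prho pM; rewrite RRe_real // ger0_real // tr_mul_psd_ge0. Qed.

Lemma prob_ge0 rho M : psd rho -> psd M -> 0 <= prob rho M.
Proof. by move=> prho pM; rewrite -ler0c -tr_mul_psdE // tr_mul_psd_ge0. Qed.

Lemma sum_prob rho A : density rho -> observable A -> \sum_j prob rho (A j) = 1.
Proof.
move=> [prho tr1] [pA sumA]; apply: (@complexI R); rewrite rmorph_sum /=.
under eq_bigr => j _ do rewrite -tr_mul_psdE //.
by rewrite -raddf_sum -mulmx_sumr sumA mulmx1; apply: tr1.
Qed.

Lemma Re_norm_tr_sub rho A B j : density rho -> observable A -> observable B ->
  complex.Re `|\tr (rho *m (A j - B j))| = `|prob rho (A j) - prob rho (B j)|.
Proof.
move=> [prho _] [pA _] [pB _].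
rewrite mulmxBr raddfB /= !tr_mul_psdE // -rmorphB /=.
by rewrite expr0n addr0 sqrtr_sqr.
Qed.

Lemma psd_1_sub_obs A j : observable A -> psd (1%:M - A j).
Proof.
move=> [pA sumA]; rewrite -sumA (bigD1 j) //= addrC addrK.
by apply: psd_sum => k _; apply: pA.
Qed.

Lemma observable_n_gt0 A : (0 < d)%N -> observable A -> (0 < n)%N.
Proof.
move=> d_gt0 [_ sumA]; case: n A sumA => // A.
move/matrixP/(_ (Ordinal d_gt0) (Ordinal d_gt0)).
by rewrite big_ord0 !mxE eqxx => /eqP; rewrite eq_sym oner_eq0.
Qed.

Definition sharp_obs j : 'I_n -> 'M[C]_d := fun k => if k == j then 1%:M else 0.

Lemma sharp_obs_observable j : observable (sharp_obs j).
Proof.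
split=> [k|]; first by rewrite /sharp_obs; case: eqP => _; [apply: psd1 | apply: psd0].
rewrite (bigD1 j) //= big1 => [|k /negbTE]; first by rewrite /sharp_obs eqxx addr0.
by rewrite /sharp_obs => ->.
Qed.

Lemma prob_sharp_obs rho j k : density rho -> prob rho (sharp_obs j k) = (k == j)%:R.
Proof.
move=> [_ tr1]; rewrite /sharp_obs /prob; case: eqP => _.
  by rewrite mulmx1 tr1.
by rewrite mulmx0 linear0.
Qed.

Lemma wcomb0 A B : wcomb A B 0 = A.
Proof. by apply: funext => j; rewrite /wcomb subr0 invr1 scale0r subr0 scale1r. Qed.

End probabilities.

Arguments sharp_obs {R d n}.
Arguments sharp_obs_observable {R d n}.

Section boundariness_and_distance.
Variables (R : realType) (d n : nat) (Cobs : 'I_n -> 'M[R[i]]_d).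
Hypotheses (Cobs_obs : observable Cobs) (d_gt0 : (0 < d)%N).
Local Notation C := R[i].
Implicit Types (rho : 'M[C]_d) (A x : 'I_n -> 'M[C]_d).

Definition outcome_probs :=
  [set prob rho (Cobs j) | j in [set: 'I_n] & rho in @density R d].

(* The least eigenvalue of the [C_j]. *)
Definition min_prob := inf outcome_probs.

Lemma outcome_probs_nonempty : outcome_probs !=set0.
Proof.
have [rho rho_dens] := density_exists R d_gt0.
have j : 'I_n := Ordinal (observable_n_gt0 d_gt0 Cobs_obs).
by exists (prob rho (Cobs j)), j => //; exists rho.
Qed.

Lemma outcome_probs_ge0 : lbound outcome_probs 0.
Proof. by move=> _ [j _ [rho [prho _] <-]]; apply: prob_ge0 (Cobs_obs.1 j). Qed.

Lemma min_prob_ge0 : 0 <= min_prob.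
Proof. exact: lb_le_inf outcome_probs_nonempty outcome_probs_ge0. Qed.

Lemma min_prob_le rho j : density rho -> min_prob <= prob rho (Cobs j).
Proof.
move=> rho_dens; apply: ge_inf; first by exists 0; apply: outcome_probs_ge0.
by exists j => //; exists rho.
Qed.

Lemma min_prob_le1 : min_prob <= 1.
Proof.
have [_ [j _ [rho rho_dens _]]] := outcome_probs_nonempty.
apply: le_trans (min_prob_le j rho_dens) _.
rewrite -(sum_prob rho_dens Cobs_obs) ler_term_sum // => k.
exact: prob_ge0 rho_dens.1 (Cobs_obs.1 k).
Qed.

(* [tr (rho C_j) >= min_prob] for the pure state [rho] along [v]. *)
Lemma psd_obs_sub_min_prob j : psd (Cobs j - (min_prob%:C)%:M).
Proof.
move=> v; change (0 <= form (Cobs j - (min_prob%:C)%:M) v v).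
have -> : form (Cobs j - (min_prob%:C)%:M) v v =
    form (Cobs j) v v - min_prob%:C * form 1%:M v v.
  by rewrite /form mulmxBr mulmxBl -[(_%:C)%:M]scalemx1 -scalemxAr -scalemxAl !mxE.
have [->|v_neq0] := eqVneq (form 1%:M v v) 0; first by rewrite mulr0 subr0; apply: Cobs_obs.1.
have rho_dens := pure_state_density v_neq0.
have formE : form (Cobs j) v v = form 1%:M v v * (prob (pure_state v) (Cobs j))%:C.
  rewrite -tr_mul_psdE; [|exact: rho_dens.1|exact: Cobs_obs.1].
  by rewrite tr_pure_state // mulVKf.
rewrite formE [_ * form _ _ _]mulrC -mulrBr mulr_ge0 ?psd1 //.
by rewrite subr_ge0 lecR min_prob_le.
Qed.

(* [C_j - t x_j = (C_j - min_prob) + (min_prob - t) + t (1 - x_j)], a sum of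
   positive operators. *)
Lemma observable_wcomb x t : observable x -> 0 <= t <= min_prob -> t < 1 ->
  observable (wcomb Cobs x t).
Proof.
move=> x_obs /andP[t_ge0 t_le] t_lt1; split=> [j|].
  rewrite /wcomb; apply: psdZ; first by rewrite invr_ge0 subr_ge0 ltW.
  have -> : Cobs j - t%:C *: x j = (Cobs j - (min_prob%:C)%:M) +
      (min_prob - t)%:C *: 1%:M + t%:C *: (1%:M - x j).
    by rewrite scalerBr rmorphB /= scalerBl !scalemx1 !addrA !subrK.
  apply: psdD; [apply: psdD | exact: psdZ t_ge0 (psd_1_sub_obs j x_obs)].
    exact: psd_obs_sub_min_prob.
  apply: psdZ; [by rewrite subr_ge0 | exact: psd1].
rewrite /wcomb -scaler_sumr sumrB -scaler_sumr Cobs_obs.2 x_obs.2.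
have -> : 1%:M - t%:C *: 1%:M = (1 - t)%:C *: 1%:M :> 'M[C]_d.
  by rewrite rmorphB rmorph1 scalerBl scale1r.
by rewrite scalerA -rmorphM mulVf ?scale1r // subr_eq0 gt_eqF.
Qed.

Lemma min_prob_le_weight x : observable x -> min_prob <= weight Cobs x.
Proof.
move=> x_obs; apply: (@le_sup_of_interval _ _ _ 1).
- by split; [rewrite lexx ltr01 | rewrite wcomb0].
- by move=> t [/andP[_ /ltW]].
move=> t /andP[t_ge0 t_lt]; have t_lt1 := lt_le_trans t_lt min_prob_le1.
by split; [rewrite t_ge0 | apply: observable_wcomb; rewrite ?t_ge0 ?ltW].
Qed.

(* Positivity of [(C_j - t I)/(1 - t)] in the state [rho] forces [t <= tr (rho C_j)]. *)
Lemma weight_sharp_obs_le j rho : density rho ->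
  weight Cobs (sharp_obs j) <= prob rho (Cobs j).
Proof.
move=> [prho tr1]; apply: ge_sup.
  by exists 0; split; [rewrite lexx ltr01 | rewrite wcomb0].
move=> t [/andP[_ t_lt1] [w_psd _]]; have := tr_mul_psd_ge0 prho (w_psd j).
rewrite /wcomb /sharp_obs eqxx -scalemxAr mxtraceZ pmulr_rge0; last first.
  by rewrite ltcR invr_gt0 subr_gt0.
rewrite mulmxBr -scalemxAr mulmx1 raddfB /= mxtraceZ tr1 mulr1 subr_ge0.
by rewrite tr_mul_psdE // ?lecR //; apply: Cobs_obs.1.
Qed.

Lemma boundariness_min_prob : boundariness Cobs = min_prob.
Proof.
have weights_lb : lbound [set weight Cobs x | x in @observable R d n] min_prob.
  by move=> _ [x x_obs <-]; apply: min_prob_le_weight.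
apply/le_anti/andP; split; last first.
  by apply: lb_le_inf weights_lb; exists (weight Cobs Cobs), Cobs.
apply: lb_le_inf outcome_probs_nonempty _ => _ [j _ [rho rho_dens <-]].
apply: le_trans (weight_sharp_obs_le j rho_dens).
apply: ge_inf; first by exists min_prob.
by exists (sharp_obs j) => //; apply: sharp_obs_observable.
Qed.

Definition dist_values A :=
  [set \sum_(j < n) complex.Re `|\tr (rho *m (Cobs j - A j))| | rho in @density R d].

Lemma dist_values_nonempty A : dist_values A !=set0.
Proof. by have [rho rho_dens] := density_exists R d_gt0; eexists; exists rho. Qed.

Lemma dist_values_ub A : observable A -> ubound (dist_values A) (2 * (1 - min_prob)).
Proof.
move=> A_obs _ [rho rho_dens <-].
under eq_bigr do rewrite Re_norm_tr_sub //.
apply: sum_abs_sub_le min_prob_ge0 _ _ (sum_prob rho_dens Cobs_obs) (sum_prob rho_dens A_obs).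
  by move=> j; apply: min_prob_le.
by move=> j; apply: prob_ge0 rho_dens.1 (A_obs.1 j).
Qed.

Lemma obs_dist_le A : observable A -> obs_dist Cobs A <= 2 * (1 - min_prob).
Proof. by move=> A_obs; apply: ge_sup (dist_values_nonempty A) (dist_values_ub A_obs). Qed.

Lemma obs_dist_sharp_ge j rho : density rho ->
  2 * (1 - prob rho (Cobs j)) <= obs_dist Cobs (sharp_obs j).
Proof.
move=> rho_dens; have sharp_obs_j := sharp_obs_observable j.
apply: sup_upper_bound.
  split; first exact: dist_values_nonempty.
  by exists (2 * (1 - min_prob)); apply: dist_values_ub.
exists rho => //; under eq_bigr do rewrite Re_norm_tr_sub // prob_sharp_obs //.
rewrite sum_abs_sub_delta ?(sum_prob rho_dens Cobs_obs) // => k.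
exact: prob_ge0 rho_dens.1 (Cobs_obs.1 k).
Qed.

Lemma sup_obs_dist :
  sup [set obs_dist Cobs A | A in @observable R d n] = 2 * (1 - min_prob).
Proof.
set S := [set obs_dist Cobs A | A in _].
have S_ub : ubound S (2 * (1 - min_prob)) by move=> _ [A A_obs <-]; apply: obs_dist_le.
have S_ne : S !=set0 by exists (obs_dist Cobs Cobs), Cobs.
apply/le_anti/andP; split; first exact: ge_sup.
suff : 1 - sup S / 2 <= min_prob by lra.
apply: lb_le_inf outcome_probs_nonempty _ => _ [j _ [rho rho_dens <-]].
have := obs_dist_sharp_ge j rho_dens.
have : S (obs_dist Cobs (sharp_obs j)).
  by exists (sharp_obs j) => //; apply: sharp_obs_observable.
move/(sup_upper_bound (conj S_ne (ex_intro _ _ S_ub))); lra.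
Qed.

End boundariness_and_distance.

Section dimension_zero.
Variables (R : realType) (n : nat) (Cobs : 'I_n -> 'M[R[i]]_0).

Lemma observable_dim0 A : observable (A : 'I_n -> 'M[R[i]]_0).
Proof. by split=> [j v|]; [rewrite mxE big_ord0 | apply/matrixP => -[]]. Qed.

Lemma obs_dist_dim0 A : obs_dist Cobs A = 0.
Proof.
rewrite /obs_dist (_ : [set _ | rho in _] = set0) ?sup0 //.
apply/seteqP; split=> // x [rho [_ tr1] _]; move: tr1.
by rewrite /mxtrace big_ord0 => /eqP; rewrite eq_sym oner_eq0.
Qed.

Lemma sup_obs_dist_dim0 : sup [set obs_dist Cobs A | A in @observable R 0 n] = 0.
Proof.
rewrite (eq_imagel (f' := fun=> 0)) => [|A _]; last exact: obs_dist_dim0.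
rewrite set_cst; case: ifP => _; [exact: sup0 | exact: sup1].
Qed.

Lemma weight_dim0 x : weight Cobs x = 1.
Proof.
pose W := [set t : R | 0 <= t < 1 /\ observable (wcomb Cobs x t)].
have W0 : W 0 by split; [rewrite lexx ltr01 | apply: observable_dim0].
have W_ub1 : ubound W 1 by move=> t [/andP[_ /ltW]].
apply/le_anti/andP; split; first by apply: ge_sup W_ub1; exists 0.
apply: le_sup_of_interval W0 W_ub1 _ => t t01.
by split=> //; apply: observable_dim0.
Qed.

Lemma boundariness_dim0 : boundariness Cobs = 1.
Proof.
rewrite /boundariness (eq_imagel (f' := fun=> 1)) => [|x _]; last exact: weight_dim0.
by rewrite set_cst ifN ?inf1 //; apply/set0P; exists Cobs; apply: observable_dim0.
Qed.

End dimension_zero.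

Theorem proposition8 (R : realType) (d n : nat) (Cobs : 'I_n -> 'M[R[i]]_d) :
  observable Cobs ->
  sup [set obs_dist Cobs A | A in @observable R d n] =
  2 * (1 - boundariness Cobs).
Proof.
case: d Cobs => [|d] Cobs Cobs_obs.
  by rewrite sup_obs_dist_dim0 boundariness_dim0 subrr mulr0.
by rewrite boundariness_min_prob // sup_obs_dist.
Qed.
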